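(* Let $\Lambda=K\mathcal{Q}/I$ be a finite-dimensional algebra over a field $K$ as in the context, let $A\geqslant1$ and let $\tilde{\Lambda}=\tilde{\Lambda}_A$ be its stretched algebra. Let $w$ be a vertex of $\tilde{\mathcal{Q}}_A$ not in $\mathcal{Q}_0$, let $v=\mathfrak{o}(\tilde{p}_w)$ and $v'=\mathfrak{t}(\tilde{q}_w)$, and let $\tilde\lambda\in\tilde{\Lambda}$. Then: (1) if $0\neq\tilde\lambda v\in\tilde{\Lambda}v$, then $\tilde\lambda\tilde{p}_w\neq0$ in $\tilde{\Lambda}$; (2) if $0\neq v'\tilde\lambda\in v'\tilde{\Lambda}$, then $\tilde{q}_w\tilde\lambda\neq0$ in $\tilde{\Lambda}$.
   Context: Conventions: $\mathcal{Q}$ is a finite quiver with vertex set $\mathcal{Q}_0$; $\mathfrak{o}(\alpha)$, $\mathfrak{t}(\alpha)$ denote start and end of an arrow or path; paths are written left to right. An element $x\in K\mathcal{Q}$ is uniform if $x=vx=xv'$ for vertices $v,v'$. $\Lambda=K\mathcal{Q}/I$ is finite-dimensional with $I$ an admissible ideal generated by a minimal set $\{g^2_1,\dots,g^2_m\}$ of uniform elements. Stretched algebra: for $A\geqslant1$, the quiver $\tilde{\mathcal{Q}}_A$ has all vertices of $\mathcal{Q}$ plus, for each arrow $\alpha$ of $\mathcal{Q}$, new vertices $w_1,\dots,w_{A-1}$; each arrow $\alpha$ is replaced by arrows $\alpha_1,\dots,\alpha_A$ with $\mathfrak{o}(\alpha_1)=\mathfrak{o}(\alpha)$, $\mathfrak{t}(\alpha_j)=\mathfrak{o}(\alpha_{j+1})=w_j$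 ($1\le j\le A-1$), $\mathfrak{t}(\alpha_A)=\mathfrak{t}(\alpha)$, and the only arrows incident with $w_j$ are $\alpha_j,\alpha_{j+1}$. $\theta^*:K\mathcal{Q}\to K\tilde{\mathcal{Q}}_A$ is the algebra homomorphism fixing vertices and sending $\alpha\mapsto\alpha_1\cdots\alpha_A$; $\tilde{I}_A$ is the ideal generated by $\theta^*(g^2_1),\dots,\theta^*(g^2_m)$; $\tilde{\Lambda}_A=K\tilde{\mathcal{Q}}_A/\tilde{I}_A$. For a new vertex $w=w_i$ on the path replacing the arrow $\alpha$, $\tilde{p}_w=\alpha_1\cdots\alpha_i$ (the unique shortest path from a vertex of $\mathcal{Q}_0$ to $w$) and $\tilde{q}_w=\alpha_{i+1}\cdots\alpha_A$ (the unique shortest path from $w$ to a vertex of $\mathcal{Q}_0$), viewed in $\tilde{\Lambda}$; thus $\mathfrak{o}(\tilde{p}_w)=\mathfrak{o}(\alpha)$, $\mathfrak{t}(\tilde{q}_w)=\mathfrak{t}(\alpha)$. *)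

(* Concrete model of path algebras K Q and of ideal
   membership; elements of K Q are represented by finite formal linear
   combinations of (raw) paths, and equality in K Q is equality of all
   coefficients. *)
From HB Require Import structures.
From mathcomp Require Import all_boot all_order all_algebra.
Set Implicit Arguments. Unset Strict Implicit. Unset Printing Implicit Defensive.
Import GRing.Theory.
Local Open Scope ring_scope.

Section PathAlgebra.
Variables (K : fieldType) (V Arr : eqType) (src tgt : Arr -> V).

(* a raw path: starting vertex and the list of its arrows (left to right) *)
Definition qpath := (V * seq Arr)%type.

Fixpoint validf (v : V) (l : seq Arr) : bool :=
  if l is a :: l' then (src a == v) && validf (tgt a) l' else true.
Fixpoint endf (v : V) (l : seq Arr) : V :=
  if l is a :: l' then endf (tgt a) l' else v.

Definition pvalid (p : qpath) := validf p.1 p.2.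
Definition pend (p : qpath) := endf p.1 p.2.
Definition pstart (p : qpath) := p.1.
Definition composable (p q : qpath) :=
  [&& pvalid p, pvalid q & pend p == q.1].
Definition pcat (p q : qpath) : qpath := (p.1, p.2 ++ q.2).

Definition elm := seq (K * qpath).
Definition coef (x : elm) (p : qpath) : K :=
  \sum_(e <- x | (e.2 == p) && pvalid e.2) e.1.
Definition eqe (x y : elm) := forall p, coef x p = coef y p.
Definition adde (x y : elm) : elm := x ++ y.
Definition scale (c : K) (x : elm) : elm := [seq (c * e.1, e.2) | e <- x].
Definition mule (x y : elm) : elm :=
  [seq (e.1 * f.1, pcat e.2 f.2) | e <- x, f <- [seq f <- y | composable e.2 f.2]].
Definition pel (p : qpath) : elm := [:: (1, p)].
Definition vtx (v : V) : elm := pel (v, [::]).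

Definition uniform (x : elm) :=
  exists v v' : V, eqe x (mule (vtx v) x) /\ eqe x (mule x (vtx v')).

(* membership in the two-sided ideal generated by gs: K-span of u g w,
   u, w paths, g in gs *)
Definition in_ideal (gs : seq elm) (x : elm) :=
  exists r : seq (K * qpath * nat * qpath),
    eqe x (flatten [seq scale t.1.1.1
                      (mule (mule (pel t.1.1.2) (nth [::] gs t.1.2)) (pel t.2))
                   | t <- r]).

(* x lies in J^n, J the arrow ideal *)
Definition in_Jpow (n : nat) (x : elm) :=
  forall p, pvalid p -> (size p.2 < n)%N -> coef x p = 0.

(* the ideal generated by gs is admissible: J^N <= I <= J^2 *)
Definition admissible (gs : seq elm) :=
  (forall g, g \in gs -> in_Jpow 2 g) /\
  exists N : nat, forall p, pvalid p -> (N <= size p.2)%N -> in_ideal gs (pel p).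

Definition minimal_gens (gs : seq elm) :=
  forall i, (i < size gs)%N ->
    ~ in_ideal [seq nth [::] gs j | j <- iota 0 (size gs) & j != i] (nth [::] gs i).

End PathAlgebra.

Section Stretch.
Variables (V Arr : eqType) (src tgt : Arr -> V) (A : nat).

(* new vertices w_i on the arrow alpha, 1 <= i <= A-1, are (alpha, i) *)
Definition newv := {x : (Arr * nat)%type | (0 < x.2 < A)%N}.
Definition svert := (V + newv)%type.
(* arrow (alpha, j) with j : 'I_A stands for alpha_(j+1) *)
Definition sarr := (Arr * 'I_A)%type.

Definition ssrc (b : sarr) : svert :=
  match insub (b.1, nat_of_ord b.2) : option newv with
  | Some w => inr w | None => inl (src b.1) end.
Definition stgt (b : sarr) : svert :=
  match insub (b.1, (nat_of_ord b.2).+1) : option newv with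
  | Some w => inr w | None => inl (tgt b.1) end.

Definition stretch_arrow (a : Arr) : seq sarr := [seq (a, j) | j <- enum 'I_A].

Definition theta (K : fieldType) (x : elm K V Arr) : elm K svert sarr :=
  [seq (e.1, (inl e.2.1, flatten [seq stretch_arrow a | a <- e.2.2]) : qpath svert sarr)
  | e <- x].

(* ~p_w = alpha_1 ... alpha_i and ~q_w = alpha_(i+1) ... alpha_A *)
Definition ptilde (w : newv) : qpath svert sarr :=
  (inl (src (val w).1), [seq ((val w).1, j) | j : 'I_A <- [seq j <- enum 'I_A | (nat_of_ord j < (val w).2)%N]]).
Definition qtilde (w : newv) : qpath svert sarr :=
  (inr w, [seq ((val w).1, j) | j : 'I_A <- [seq j <- enum 'I_A | ((val w).2 <= nat_of_ord j)%N]]).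

End Stretch.

(* For any path p, right division by p (keep the terms of an element whose path
   ends with p and strip that suffix) is a linear map on KQ sending x p to x o(p).
   It maps the ideal generated by gs into itself as soon as no path of a generator
   ends at a vertex that p visits after its first arrow: a spanning term u g z
   either has z = z' p, and goes to u g z', or contains no path ending with p,
   since such a path would pass from g to z at a vertex of p.  In the stretched
   quiver this holds for p = p_w, because the paths of theta(g) end at old vertices
   while p_w visits only new vertices after its first arrow.  Hence x p_w in the
   ideal forces x v in the ideal.  The statement for q_w is the mirror image, with
   left division by q_w. *)

From mathcomp Require Import all_boot all_order all_algebra.
Set Implicit Arguments. Unset Strict Implicit. Unset Printing Implicit Defensive.
Import GRing.Theory.
Local Open Scope ring_scope.

Lemma eqseq_cat_sizel (T : eqType) (s1 s2 t1 t2 : seq T) :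
  s1 ++ s2 = t1 ++ t2 -> size s1 = size t1 -> s1 = t1 /\ s2 = t2.
Proof. by move=> /eqP + Hs; rewrite eqseq_cat // => /andP[/eqP -> /eqP ->]. Qed.

Lemma eqseq_cat_sizer (T : eqType) (s1 s2 t1 t2 : seq T) :
  s1 ++ s2 = t1 ++ t2 -> size s2 = size t2 -> s1 = t1 /\ s2 = t2.
Proof.
move=> E Es; have Hs : size s1 = size t1.
  by apply/(@addIn (size s2)); rewrite -size_cat E size_cat Es.
exact: eqseq_cat_sizel E Hs.
Qed.

Section PathAlgebra.
Variables (K : fieldType) (V Arr : eqType) (src tgt : Arr -> V).
Implicit Types (p q u z : qpath V Arr) (x y G : elm K V Arr) (gs : seq (elm K V Arr)).

Local Notation validf := (validf src tgt).
Local Notation endf := (endf tgt).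
Local Notation pvalid := (pvalid src tgt).
Local Notation pend := (pend tgt).
Local Notation composable := (composable src tgt).
Local Notation coef := (coef src tgt).
Local Notation mule := (mule src tgt).
Local Notation in_ideal := (in_ideal src tgt).
Local Notation pel := (pel K).
Local Notation vtx := (vtx K Arr).

Lemma validf_cat s l1 l2 : validf s (l1 ++ l2) = validf s l1 && validf (endf s l1) l2.
Proof. by elim: l1 s => [|a l IH] s //=; rewrite IH andbA. Qed.

Lemma endf_cat s l1 l2 : endf s (l1 ++ l2) = endf (endf s l1) l2.
Proof. by elim: l1 s => [|a l IH] s /=. Qed.

Lemma pvalid_pcat p q : pvalid (pcat p q) = pvalid p && validf (pend p) q.2.
Proof. by rewrite /pvalid /= validf_cat. Qed.

Lemma pend_pcat p q : pend (pcat p q) = endf (pend p) q.2.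
Proof. by rewrite /pend /= endf_cat. Qed.

Lemma pcatA p q z : pcat (pcat p q) z = pcat p (pcat q z).
Proof. by rewrite /pcat /= catA. Qed.

Lemma composable_pcat p q : composable p q -> pvalid (pcat p q) /\ pend (pcat p q) = pend q.
Proof. by case/and3P=> Hp Hq /eqP Hpq; rewrite pvalid_pcat pend_pcat Hpq Hp. Qed.

Lemma composable_pcatl p q z : composable p q -> composable (pcat p q) z = composable q z.
Proof.
move=> Hpq; have [Hv He] := composable_pcat Hpq.
by rewrite /composable Hv He; case/and3P: Hpq => _ -> _.
Qed.

Lemma composable_pcatr p q z : composable q z -> composable p (pcat q z) = composable p q.
Proof.
move=> Hqz; have [Hv _] := composable_pcat Hqz.
by rewrite /composable Hv; case/and3P: Hqz => -> _ _.
Qed.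

Definition rquo_path p z : qpath V Arr := (z.1, take (size z.2 - size p.2) z.2).
Definition lquo_path p z : qpath V Arr := (pend p, drop (size p.2) z.2).
Definition rdvd_path p z := (z == pcat (rquo_path p z) p) && composable (rquo_path p z) p.
Definition ldvd_path p z := (z == pcat p (lquo_path p z)) && composable p (lquo_path p z).

Lemma rquo_path_pcat p q : rquo_path p (pcat q p) = q.
Proof. by rewrite /rquo_path /= size_cat addnK take_size_cat // -surjective_pairing. Qed.

Lemma lquo_path_pcat p q : q.1 = pend p -> lquo_path p (pcat p q) = q.
Proof. by move=> Hq; rewrite /lquo_path /= drop_size_cat // -Hq -surjective_pairing. Qed.

Lemma rdvd_path_pcat p q : rdvd_path p (pcat q p) = composable q p.
Proof. by rewrite /rdvd_path rquo_path_pcat eqxx. Qed.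

Lemma ldvd_path_pcat p q : q.1 = pend p -> ldvd_path p (pcat p q) = composable p q.
Proof. by move=> Hq; rewrite /ldvd_path lquo_path_pcat // eqxx. Qed.

Lemma rdvd_pathP p z : reflect (exists2 q, z = pcat q p & composable q p) (rdvd_path p z).
Proof.
apply: (iffP andP) => [[/eqP Hz Hc]|[q -> Hc]]; first by exists (rquo_path p z).
by rewrite rquo_path_pcat.
Qed.

Lemma ldvd_pathP p z : reflect (exists2 q, z = pcat p q & composable p q) (ldvd_path p z).
Proof.
apply: (iffP andP) => [[/eqP Hz Hc]|[q -> Hc]]; first by exists (lquo_path p z).
by rewrite lquo_path_pcat //; case/and3P: Hc => _ _ /eqP.
Qed.

Lemma mule_pelr x p : mule x (pel p) = [seq (e.1, pcat e.2 p) | e <- x & composable e.2 p].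
Proof. by rewrite /mule; elim: x => //= e x ->; case: ifP => //= _; rewrite mulr1. Qed.

Lemma mule_pell p x : mule (pel p) x = [seq (f.1, pcat p f.2) | f <- x & composable p f.2].
Proof. by rewrite /mule /= cats0; apply: eq_map => f; rewrite mul1r. Qed.

Lemma coef_mule_pelr x p z :
  coef (mule x (pel p)) z = if rdvd_path p z then coef x (rquo_path p z) else 0.
Proof.
rewrite /coef mule_pelr big_map big_filter_cond /=.
case: rdvd_pathP => [[q -> Hqp]|Hz]; last first.
  by rewrite big_pred0 // => e; apply/and3P => -[Hc /eqP Hz' _]; apply: Hz; exists e.2.
rewrite rquo_path_pcat; apply: eq_bigl => e /=.
apply/and3P/andP => [[Hc /eqP /(can_inj (@rquo_path_pcat p)) -> _]|[/eqP -> Hq]].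
  by split=> //; case/and3P: Hqp.
by rewrite Hqp eqxx (composable_pcat Hqp).1.
Qed.

Lemma coef_mule_pell p x z :
  coef (mule (pel p) x) z = if ldvd_path p z then coef x (lquo_path p z) else 0.
Proof.
rewrite /coef mule_pell big_map big_filter_cond /=.
case: ldvd_pathP => [[q -> Hpq]|Hz]; last first.
  by rewrite big_pred0 // => f; apply/and3P => -[Hc /eqP Hz' _]; apply: Hz; exists f.2.
have Hq : q.1 = pend p by case/and3P: Hpq => _ _ /eqP.
rewrite lquo_path_pcat //; apply: eq_bigl => f /=.
apply/and3P/andP => [[Hc /eqP Hf _]|[/eqP -> Hv]].
  have Hf1 : f.2.1 = pend p by case/and3P: Hc => _ _ /eqP.
  by rewrite -(lquo_path_pcat Hf1) Hf lquo_path_pcat // eqxx; case/and3P: Hpq.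
by rewrite Hpq eqxx (composable_pcat Hpq).1.
Qed.

Definition rquo p y : elm K V Arr := [seq (e.1, rquo_path p e.2) | e <- y & rdvd_path p e.2].
Definition lquo p y : elm K V Arr := [seq (e.1, lquo_path p e.2) | e <- y & ldvd_path p e.2].

Lemma coef_rquo p y q : coef (rquo p y) q = if composable q p then coef y (pcat q p) else 0.
Proof.
rewrite /coef /rquo big_map big_filter_cond /=; case: ifP => Hqp; last first.
  by rewrite big_pred0 // => e; apply/and3P => -[/rdvd_pathP[q' -> Hq'] /eqP Hq _];
    rewrite -Hq rquo_path_pcat Hq' in Hqp.
apply: eq_bigl => e /=; apply/and3P/andP => [[/rdvd_pathP[q' -> Hq'] /eqP Hq _]|[/eqP -> _]].
  by move: Hq; rewrite rquo_path_pcat => ->; rewrite eqxx (composable_pcat Hqp).1.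
by rewrite rdvd_path_pcat rquo_path_pcat Hqp eqxx; case/and3P: Hqp.
Qed.

Lemma coef_lquo p y q : coef (lquo p y) q = if composable p q then coef y (pcat p q) else 0.
Proof.
rewrite /coef /lquo big_map big_filter_cond /=; case: ifP => Hpq; last first.
  by rewrite big_pred0 // => e; apply/and3P => -[/ldvd_pathP[q' -> Hq'] /eqP Hq _];
    rewrite -Hq lquo_path_pcat ?Hq' // in Hpq; case/and3P: Hq' => _ _ /eqP.
have Hq : q.1 = pend p by case/and3P: Hpq => _ _ /eqP.
apply: eq_bigl => e /=; apply/and3P/andP => [[/ldvd_pathP[q' -> Hq'] /eqP Hqq _]|[/eqP -> _]].
  move: Hqq; rewrite lquo_path_pcat => [->|]; last by case/and3P: Hq' => _ _ /eqP.
  by rewrite eqxx (composable_pcat Hpq).1.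
by rewrite ldvd_path_pcat // lquo_path_pcat // Hpq eqxx; case/and3P: Hpq.
Qed.

Lemma mule_vtx_rquo x p : pvalid p -> eqe src tgt (mule x (vtx p.1)) (rquo p (mule x (pel p))).
Proof.
move=> Hp q; rewrite coef_rquo coef_mule_pelr coef_mule_pelr rdvd_path_pcat rquo_path_pcat.
have -> : rquo_path (p.1, [::]) q = q by rewrite /rquo_path subn0 take_size -surjective_pairing.
have -> : rdvd_path (p.1, [::]) q = composable q p.
  rewrite /rdvd_path /rquo_path /pcat /= subn0 take_size cats0 -surjective_pairing eqxx.
  by rewrite /composable Hp.
by case: ifP.
Qed.

Lemma mule_vtx_lquo p x : pvalid p -> eqe src tgt (mule (vtx (pend p)) x) (lquo p (mule (pel p) x)).
Proof.
move=> Hp q; rewrite coef_lquo coef_mule_pell coef_mule_pell.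
case: (boolP (composable p q)) => Hpq; last first.
  case: ldvd_pathP => // -[q' Eq Hq']; case/negP: Hpq.
  have Hq'1 : q'.1 = pend p by case/and3P: Hq' => _ _ /eqP.
  rewrite Eq /pcat /= -Hq'1 -surjective_pairing /composable Hp Hq'1 eqxx andbT.
  by case/and3P: Hq'.
have Hq : q.1 = pend p by case/and3P: Hpq => _ _ /eqP.
have Eq : pcat (pend p, [::]) q = q by rewrite /pcat /= -Hq -surjective_pairing.
rewrite ldvd_path_pcat // lquo_path_pcat // Hpq -{1 2}Eq ldvd_path_pcat // lquo_path_pcat //.
by rewrite /composable Hq eqxx andbT; case/and3P: Hpq => _ -> _.
Qed.

Lemma rdvd_path_pcatP p u z : composable u z -> rdvd_path p (pcat u z) ->
  rdvd_path p z \/ exists2 k, (0 < k <= size p.2)%N & pend u = endf p.1 (take k p.2).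
Proof.
move=> Huz /rdvd_pathP[q Eq Hqp].
have Ecat : u.2 ++ z.2 = q.2 ++ p.2 by move/(congr1 snd): Eq.
have Hu1 : u.1 = q.1 by move/(congr1 fst): Eq.
have Hqp1 : pend q = p.1 by case/and3P: Hqp => _ _ /eqP.
case: (leqP (size p.2) (size z.2)) => Hs.
  left; have [z' Hz] : exists z', z = pcat z' p.
    set n := (size z.2 - size p.2)%N.
    have Ez : z.2 = take n z.2 ++ drop n z.2 by rewrite cat_take_drop.
    have [_ Ep] : u.2 ++ take n z.2 = q.2 /\ drop n z.2 = p.2.
      by apply: eqseq_cat_sizer; rewrite -?catA -?Ez ?size_drop ?subKn.
    by exists (z.1, take n z.2); rewrite /pcat /= -Ep -Ez -surjective_pairing.
  subst z; rewrite rdvd_path_pcat.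
  have Eq' : q = pcat u z' by apply: (can_inj (@rquo_path_pcat p)); rewrite -Eq pcatA.
  case/and3P: Huz => _ + /eqP Hu; rewrite pvalid_pcat => /andP[Hz' _].
  have Hp : pvalid p by case/and3P: Hqp => _ ->.
  by rewrite /composable Hz' Hp -Hqp1 Eq' pend_pcat Hu eqxx.
right; set k := (size p.2 - size z.2)%N.
exists k; first by rewrite subn_gt0 Hs leq_subr.
have Ep : p.2 = take k p.2 ++ drop k p.2 by rewrite cat_take_drop.
have [Eu _] : u.2 = q.2 ++ take k p.2 /\ z.2 = drop k p.2.
  by apply: eqseq_cat_sizer; rewrite -?catA -?Ep ?size_drop ?subKn // ltnW.
by rewrite /pend Eu endf_cat Hu1 -Hqp1.
Qed.

Lemma ldvd_path_pcatP p u z : composable u z -> ldvd_path p (pcat u z) ->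
  ldvd_path p u \/ exists2 k, (k < size p.2)%N & z.1 = endf p.1 (take k p.2).
Proof.
move=> Huz /ldvd_pathP[q Eq Hpq].
have Ecat : u.2 ++ z.2 = p.2 ++ q.2 by move/(congr1 snd): Eq.
have Hu1 : u.1 = p.1 by move/(congr1 fst): Eq.
case: (leqP (size p.2) (size u.2)) => Hs.
  left; have [u' Hu Hu'] : exists2 u', u = pcat p u' & u'.1 = pend p.
    set n := size p.2.
    have Eu : u.2 = take n u.2 ++ drop n u.2 by rewrite cat_take_drop.
    have [Ep _] : take n u.2 = p.2 /\ drop n u.2 ++ z.2 = q.2.
      by apply: eqseq_cat_sizel; rewrite ?catA -?Eu ?size_takel.
    by exists (pend p, drop n u.2); rewrite // /pcat /= -Ep -Eu -Hu1 -surjective_pairing.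
  subst u; rewrite ldvd_path_pcat //.
  have -> : composable p u' = pvalid (pcat p u').
    by rewrite /composable pvalid_pcat /pvalid Hu' eqxx andbT.
  by case/and3P: Huz.
right; set k := size u.2; exists k => //.
have Ep : p.2 = take k p.2 ++ drop k p.2 by rewrite cat_take_drop.
have [Eu _] : u.2 = take k p.2 /\ z.2 = drop k p.2 ++ q.2.
  by apply: eqseq_cat_sizel; rewrite ?catA -?Ep ?size_takel // ltnW.
by case/and3P: Huz => _ _ /eqP <-; rewrite /pend -Eu Hu1.
Qed.

Lemma mule_pel_pel u G z : mule (mule (pel u) G) (pel z) =
  [seq (f.1, pcat (pcat u f.2) z) | f <- G & composable u f.2 && composable (pcat u f.2) z].
Proof.
rewrite mule_pelr mule_pell; elim: G => //= f G IH.
by case: (composable u f.2) => //=; case: (composable _ z) => /=; rewrite IH.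
Qed.

Lemma rquo_cat p y y' : rquo p (y ++ y') = rquo p y ++ rquo p y'.
Proof. by rewrite /rquo filter_cat map_cat. Qed.

Lemma lquo_cat p y y' : lquo p (y ++ y') = lquo p y ++ lquo p y'.
Proof. by rewrite /lquo filter_cat map_cat. Qed.

Lemma rquo_scale c p y : rquo p (scale c y) = scale c (rquo p y).
Proof. by rewrite /rquo /scale filter_map -!map_comp. Qed.

Lemma lquo_scale c p y : lquo p (scale c y) = scale c (lquo p y).
Proof. by rewrite /lquo /scale filter_map -!map_comp. Qed.

Lemma rquo_mapfilter p (P : pred (K * qpath V Arr)) (h : K * qpath V Arr -> qpath V Arr) G :
  rquo p [seq (f.1, h f) | f <- G & P f] =
  [seq (f.1, rquo_path p (h f)) | f <- G & P f && rdvd_path p (h f)].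
Proof.
rewrite /rquo; elim: G => //= f G IH.
by case: (P f) => //=; case: (rdvd_path p (h f)) => /=; rewrite IH.
Qed.

Lemma lquo_mapfilter p (P : pred (K * qpath V Arr)) (h : K * qpath V Arr -> qpath V Arr) G :
  lquo p [seq (f.1, h f) | f <- G & P f] =
  [seq (f.1, lquo_path p (h f)) | f <- G & P f && ldvd_path p (h f)].
Proof.
rewrite /lquo; elim: G => //= f G IH.
by case: (P f) => //=; case: (ldvd_path p (h f)) => /=; rewrite IH.
Qed.

Lemma rquo_term p u G z :
  (forall f k, f \in G -> (0 < k <= size p.2)%N -> pend f.2 != endf p.1 (take k p.2)) ->
  rquo p (mule (mule (pel u) G) (pel z)) =
  if rdvd_path p z then mule (mule (pel u) G) (pel (rquo_path p z)) else [::].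
Proof.
move=> HG; rewrite !mule_pel_pel rquo_mapfilter.
case: (boolP (rdvd_path p z)) => [/rdvd_pathP[z' -> Hz'] | Hz].
  rewrite rquo_path_pcat.
  have Hf (f : K * qpath V Arr) : composable u f.2 && composable (pcat u f.2) (pcat z' p)
      && rdvd_path p (pcat (pcat u f.2) (pcat z' p))
    = composable u f.2 && composable (pcat u f.2) z'.
    rewrite composable_pcatr // -pcatA rdvd_path_pcat.
    by case: (boolP (composable _ z')) => H; rewrite ?andbF // composable_pcatl // Hz' andbT.
  by rewrite (eq_filter Hf); apply: eq_map => f; rewrite -pcatA rquo_path_pcat.
rewrite (@eq_in_filter _ _ pred0) ?filter_pred0 // => f Hf /=.
apply/negP => /andP[/andP[Huf Hz2] /(rdvd_path_pcatP Hz2)[/(negP Hz)[] | [k Hk]]].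
by rewrite (composable_pcat Huf).2; apply/eqP/HG.
Qed.

Lemma lquo_term p u G z :
  (forall f k, f \in G -> (k < size p.2)%N -> f.2.1 != endf p.1 (take k p.2)) ->
  lquo p (mule (mule (pel u) G) (pel z)) =
  if ldvd_path p u then mule (mule (pel (lquo_path p u)) G) (pel z) else [::].
Proof.
move=> HG; rewrite !mule_pel_pel lquo_mapfilter.
case: (boolP (ldvd_path p u)) => [/ldvd_pathP[u' -> Hu'] | Hu].
  have Hu'1 : u'.1 = pend p by case/and3P: Hu' => _ _ /eqP.
  rewrite lquo_path_pcat //.
  have Hf (f : K * qpath V Arr) : composable (pcat p u') f.2 && composable (pcat (pcat p u') f.2) z
      && ldvd_path p (pcat (pcat (pcat p u') f.2) z)
    = composable u' f.2 && composable (pcat u' f.2) z.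
    rewrite composable_pcatl // pcatA.
    case: (boolP (composable u' f.2)) => H1 //=.
    rewrite composable_pcatl ?composable_pcatr //.
    case: (boolP (composable _ z)) => H2 //=.
    by rewrite pcatA ldvd_path_pcat // !composable_pcatr.
  by rewrite (eq_filter Hf); apply: eq_map => f; rewrite !pcatA lquo_path_pcat.
rewrite (@eq_in_filter _ _ pred0) ?filter_pred0 // => f Hf /=.
apply/negP => /andP[/andP[Huf Hz2]]; rewrite pcatA.
have Hu2 : composable u (pcat f.2 z) by rewrite composable_pcatr // -(composable_pcatl _ Huf).
by case/(ldvd_path_pcatP Hu2) => [/(negP Hu)[] | [k Hk]]; apply/eqP/HG.
Qed.

Definition ideal_term gs (t : K * qpath V Arr * nat * qpath V Arr) : elm K V Arr :=
  scale t.1.1.1 (mule (mule (pel t.1.1.2) (nth [::] gs t.1.2)) (pel t.2)).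

Definition ends_off_path gs p := forall g f k, g \in gs -> f \in g ->
  (0 < k <= size p.2)%N -> pend f.2 != endf p.1 (take k p.2).

Definition starts_off_path gs p := forall g f k, g \in gs -> f \in g ->
  (k < size p.2)%N -> f.2.1 != endf p.1 (take k p.2).

Lemma mem_nth_gens gs n f : f \in nth [::] gs n -> exists2 g, g \in gs & f \in g.
Proof.
case: (ltnP n (size gs)) => Hn; last by rewrite nth_default.
by exists (nth [::] gs n); rewrite ?mem_nth.
Qed.

Lemma rquo_ideal_term gs p t : ends_off_path gs p ->
  rquo p (ideal_term gs t) =
  if rdvd_path p t.2 then ideal_term gs (t.1.1.1, t.1.1.2, t.1.2, rquo_path p t.2) else [::].
Proof.
move=> Hgs; rewrite /ideal_term rquo_scale rquo_term; first by case: ifP.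
by move=> f k /mem_nth_gens[g Hg Hf]; apply: Hgs Hf.
Qed.

Lemma lquo_ideal_term gs p t : starts_off_path gs p ->
  lquo p (ideal_term gs t) =
  if ldvd_path p t.1.1.2 then ideal_term gs (t.1.1.1, lquo_path p t.1.1.2, t.1.2, t.2) else [::].
Proof.
move=> Hgs; rewrite /ideal_term lquo_scale lquo_term; first by case: ifP.
by move=> f k /mem_nth_gens[g Hg Hf]; apply: Hgs Hf.
Qed.

Lemma rquo_in_ideal gs p y : ends_off_path gs p -> in_ideal gs y -> in_ideal gs (rquo p y).
Proof.
move=> Hgs [r Hr].
exists [seq (t.1.1.1, t.1.1.2, t.1.2, rquo_path p t.2) | t <- r & rdvd_path p t.2].
move=> q; rewrite coef_rquo Hr -coef_rquo; congr coef.
elim: r {Hr} => //= t r IH; rewrite rquo_cat IH (rquo_ideal_term _ Hgs).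
by case: ifP.
Qed.

Lemma lquo_in_ideal gs p y : starts_off_path gs p -> in_ideal gs y -> in_ideal gs (lquo p y).
Proof.
move=> Hgs [r Hr].
exists [seq (t.1.1.1, lquo_path p t.1.1.2, t.1.2, t.2) | t <- r & ldvd_path p t.1.1.2].
move=> q; rewrite coef_lquo Hr -coef_lquo; congr coef.
elim: r {Hr} => //= t r IH; rewrite lquo_cat IH (lquo_ideal_term _ Hgs).
by case: ifP.
Qed.

Lemma in_ideal_mule_pelr gs p x : pvalid p -> ends_off_path gs p ->
  in_ideal gs (mule x (pel p)) -> in_ideal gs (mule x (vtx p.1)).
Proof.
move=> Hp Hgs /(rquo_in_ideal Hgs)[r Hr]; exists r => q.
by rewrite (mule_vtx_rquo x Hp) Hr.
Qed.

Lemma in_ideal_mule_pell gs p x : pvalid p -> starts_off_path gs p ->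
  in_ideal gs (mule (pel p) x) -> in_ideal gs (mule (vtx (pend p)) x).
Proof.
move=> Hp Hgs /(lquo_in_ideal Hgs)[r Hr]; exists r => q.
by rewrite (mule_vtx_lquo x Hp) Hr.
Qed.

End PathAlgebra.

Section Stretch.
Variables (V Arr : eqType) (src tgt : Arr -> V) (A : nat).
Local Notation svert := (svert V Arr A).
Local Notation ssrc := (@ssrc V Arr src A).
Local Notation stgt := (@stgt V Arr tgt A).
Local Notation validf := (validf ssrc stgt).
Local Notation endf := (endf stgt).
Local Notation pvalid := (pvalid ssrc stgt).
Local Notation pend := (pend stgt).

Definition is_old_vertex (s : svert) : bool := if s is inl _ then true else false.

(* The vertex reached after j of the arrows a_1, ..., a_A; junk value t(a) for j > A. *)
Definition node (a : Arr) (j : nat) : svert :=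
  match insub (a, j) : option (newv Arr A) with
  | Some w => inr w
  | None => if j == 0%N then inl (src a) else inl (tgt a)
  end.

Lemma ssrc_node b : ssrc b = node b.1 b.2.
Proof.
rewrite /ssrc /node; case: insubP => //= H.
by move: H; rewrite ltn_ord andbT -eqn0Ngt => ->.
Qed.

Lemma stgt_node b : stgt b = node b.1 b.2.+1.
Proof. by rewrite /stgt /node; case: insubP. Qed.

Lemma node0 a : node a 0 = inl (src a).
Proof. by rewrite /node insubF. Qed.

Lemma nodeA a : (0 < A)%N -> node a A = inl (tgt a).
Proof. by move=> A_gt0; rewrite /node insubF /= ?ltnn ?andbF // eqn0Ngt A_gt0. Qed.

Lemma node_newv (w : newv Arr A) : node (val w).1 (val w).2 = inr w.
Proof. by rewrite /node -surjective_pairing valK. Qed.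

Lemma node_new a j : (0 < j < A)%N -> ~~ is_old_vertex (node a j).
Proof. by move=> Hj; rewrite /node insubT. Qed.

Lemma validf_run a (js : seq 'I_A) j :
  map val js = iota j (size js) -> validf (node a j) [seq (a, t) | t <- js].
Proof.
elim: js j => //= t js IH j [Ht Hjs].
by rewrite ssrc_node stgt_node /= Ht eqxx IH.
Qed.

Lemma endf_run a (js : seq 'I_A) j :
  map val js = iota j (size js) -> endf (node a j) [seq (a, t) | t <- js] = node a (j + size js).
Proof.
elim: js j => /= [|t js IH] j; first by rewrite addn0.
by case=> Ht Hjs; rewrite stgt_node /= Ht IH // addSnnS.
Qed.

Lemma map_val_filter_enum (P : pred nat) :
  map val [seq j : 'I_A <- enum 'I_A | P j] = [seq n <- iota 0 A | P n].
Proof. by rewrite -val_enum_ord filter_map. Qed.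

Lemma endf_stretch_arrow s a : (0 < A)%N -> endf s (stretch_arrow A a) = inl (tgt a).
Proof.
move=> A_gt0; have := endf_run a (j := 0) (js := enum 'I_A).
rewrite val_enum_ord size_enum_ord node0 add0n nodeA // => /(_ erefl) <-.
have : (0 < size (enum 'I_A))%N by rewrite size_enum_ord.
by rewrite /stretch_arrow; case: (enum 'I_A).
Qed.

Lemma theta_term_old (K : fieldType) (g : elm K V Arr) f : (0 < A)%N ->
  f \in theta A g -> is_old_vertex f.2.1 && is_old_vertex (pend f.2).
Proof.
move=> A_gt0 /mapP[e _ ->] /=; rewrite /pend /=.
elim: e.2.2 (e.2.1) => //= a l IH v.
by rewrite endf_cat endf_stretch_arrow.
Qed.

Section NewVertex.
Variable w : newv Arr A.
Local Notation a := (val w).1.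
Local Notation i := (val w).2.
Local Notation pt := (ptilde src w).
Local Notation qt := (qtilde V w).

Lemma newv_bounds : (0 < i < A)%N.
Proof. exact: valP w. Qed.

Lemma ptilde_ords : map val [seq j : 'I_A <- enum 'I_A | (j < i)%N] = iota 0 i.
Proof.
rewrite (map_val_filter_enum (ltn^~ i)).
have /(filter_iota_ltn 0) : (i <= A)%N by case/andP: newv_bounds => _ /ltnW.
by rewrite add0n.
Qed.

Lemma qtilde_ords : map val [seq j : 'I_A <- enum 'I_A | (i <= j)%N] = iota i (A - i).
Proof.
have HiA : (i <= A)%N by case/andP: newv_bounds => _ /ltnW.
rewrite (map_val_filter_enum (leq i)) -[X in iota 0 X](subnKC HiA) iotaD filter_cat add0n.
rewrite (@eq_in_filter _ _ pred0) ?filter_pred0; last first.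
  by move=> n; rewrite mem_iota /= add0n ltnNge; apply: negbTE.
rewrite (@eq_in_filter _ _ predT) ?filter_predT // => n.
by rewrite mem_iota => /andP[].
Qed.

Lemma pvalid_ptilde : pvalid pt.
Proof.
rewrite /pvalid /= -node0; apply: validf_run.
by rewrite ptilde_ords -(size_map val) ptilde_ords size_iota.
Qed.

Lemma pvalid_qtilde : pvalid qt.
Proof.
rewrite /pvalid /= -node_newv; apply: validf_run.
by rewrite qtilde_ords -(size_map val) qtilde_ords size_iota.
Qed.

Lemma pend_qtilde : pend qt = inl (tgt a).
Proof.
have [i_gt0 iA] := andP newv_bounds.
rewrite /pend /= -node_newv endf_run; last first.
  by rewrite qtilde_ords -(size_map val) qtilde_ords size_iota.
rewrite -(size_map val) qtilde_ords size_iota subnKC ?nodeA //; last exact: ltnW.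
exact: ltn_trans iA.
Qed.

Lemma endf_ptilde_take k : (0 < k <= size pt.2)%N -> ~~ is_old_vertex (endf pt.1 (take k pt.2)).
Proof.
have [_ iA] := andP newv_bounds.
have Hjs : size [seq j : 'I_A <- enum 'I_A | (j < i)%N] = i.
  by rewrite -(size_map val) ptilde_ords size_iota.
rewrite size_map Hjs => /andP[k_gt0 ki].
rewrite /= -node0 -map_take endf_run; last first.
  by rewrite map_take ptilde_ords take_iota size_takel ?Hjs // (minn_idPl ki).
rewrite size_takel ?Hjs // add0n.
by apply: node_new; rewrite k_gt0 (leq_ltn_trans ki).
Qed.

Lemma endf_qtilde_take k : (k < size qt.2)%N -> ~~ is_old_vertex (endf qt.1 (take k qt.2)).
Proof.
have [i_gt0 _] := andP newv_bounds.
have Hjs : size [seq j : 'I_A <- enum 'I_A | (i <= j)%N] = (A - i)%N.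
  by rewrite -(size_map val) qtilde_ords size_iota.
rewrite size_map Hjs => kAi.
rewrite /= -node_newv -map_take endf_run; last first.
  have kAi' : (k <= A - i)%N by rewrite ltnW.
  by rewrite map_take qtilde_ords take_iota size_takel ?Hjs // (minn_idPl kAi').
rewrite size_takel; last by rewrite Hjs ltnW.
by apply: node_new; rewrite addn_gt0 i_gt0 -ltn_subRL.
Qed.

Lemma ends_off_ptilde (K : fieldType) (gs : seq (elm K V Arr)) : (0 < A)%N ->
  ends_off_path stgt [seq theta A g | g <- gs] pt.
Proof.
move=> A_gt0 _ f k /mapP[g _ ->] /(theta_term_old A_gt0)/andP[_ Hf] /endf_ptilde_take.
by apply: contraNneq => <-.
Qed.

Lemma starts_off_qtilde (K : fieldType) (gs : seq (elm K V Arr)) : (0 < A)%N ->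
  starts_off_path stgt [seq theta A g | g <- gs] qt.
Proof.
move=> A_gt0 _ f k /mapP[g _ ->] /(theta_term_old A_gt0)/andP[Hf _] /endf_qtilde_take.
by apply: contraNneq => <-.
Qed.

End NewVertex.

End Stretch.

Theorem proposition1p10 (K : fieldType) (V Arr : finType) (src tgt : Arr -> V)
  (gs : seq (elm K V Arr)) (A : nat) :
  admissible src tgt gs ->
  (forall g, g \in gs -> uniform src tgt g) ->
  minimal_gens src tgt gs ->
  (0 < A)%N ->
  forall (w : newv Arr A) (x : elm K (svert V Arr A) (sarr Arr A)),
  let s_src := @ssrc V Arr src A in
  let s_tgt := @stgt V Arr tgt A in
  let sgs := [seq theta A g | g <- gs] in
  let v := inl (src (val w).1) : svert V Arr A in
  let v' := inl (tgt (val w).1) : svert V Arr A in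
  (~ in_ideal s_src s_tgt sgs (mule s_src s_tgt x (vtx K (sarr Arr A) v)) ->
   ~ in_ideal s_src s_tgt sgs (mule s_src s_tgt x (pel K (ptilde src w)))) /\
  (~ in_ideal s_src s_tgt sgs (mule s_src s_tgt (vtx K (sarr Arr A) v') x) ->
   ~ in_ideal s_src s_tgt sgs (mule s_src s_tgt (pel K (qtilde V w)) x)).
Proof.
move=> _ _ _ A_gt0 w x s_src s_tgt sgs v v'; split=> Hx; apply: contra_not Hx.
  by apply: in_ideal_mule_pelr; [exact: pvalid_ptilde | exact: ends_off_ptilde].
rewrite /v' -(pend_qtilde src tgt w).
by apply: in_ideal_mule_pell; [exact: pvalid_qtilde | exact: starts_off_qtilde].
Qed.
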